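(* Let $G=(V,E)$ be a finite, simple, connected graph with Bakry Emery curvature $K(x)\geq K>0$ at every vertex $x$. Then \[ \operatorname{diam}_{\operatorname{eff}}(G)\leq\frac{\max_v\operatorname{Deg}(v)}{K}. \]
   Context: $d$ is the combinatorial distance, $\operatorname{Deg}$ the degree, $\operatorname{diam}_{\operatorname{eff}}(G)=\frac{1}{|V|^2}\sum_{x,y}d(x,y)$. Laplacian $\Delta f(x)=\sum_{y\sim x}(f(y)-f(x))$. Define $\Gamma_0(f,g)=fg$ and $2\Gamma_{i+1}(f,g)=\Delta\Gamma_i(f,g)-\Gamma_i(f,\Delta g)-\Gamma_i(\Delta f,g)$; write $\Gamma=\Gamma_1$, $\Gamma_i f=\Gamma_i(f,f)$. The Bakry Emery curvature at $x$ is $K(x)=\inf\{\Gamma_2 f(x): f:V\to\mathbb{R},\ \Gamma f(x)=1\}$. *)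

From HB Require Import structures.
From mathcomp Require Import all_boot all_order all_algebra.
From mathcomp Require Import boolp classical_sets reals constructive_ereal ereal.
Set Implicit Arguments. Unset Strict Implicit. Unset Printing Implicit Defensive.
Import Order.TTheory GRing.Theory Num.Theory.
Local Open Scope ring_scope.

Section Graph.
Variables (T : finType) (e : rel T).

Definition simple_graph := symmetric e /\ irreflexive e.
Definition connected_graph := forall x y : T, connect e x y.

Definition Deg (v : T) : nat := #|[set y | e v y]|.
Definition maxDeg : nat := \max_(v : T) Deg v.

Definition walk_len (x y : T) (n : nat) : bool :=
  [exists p : n.-tuple T, path e x p && (last x p == y)].

(* combinatorial distance: least length of a walk from x to y
   (in a connected graph this is < #|T|, so the search range suffices) *)
Definition dist (x y : T) : nat := find (walk_len x y) (iota 0 #|T|).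

Variable R : realType.

Definition diam_eff : R :=
  (#|T|%:R ^+ 2)^-1 * \sum_(x : T) \sum_(y : T) (dist x y)%:R.

Definition lap (f : T -> R) : T -> R := fun x => \sum_(y | e x y) (f y - f x).

Fixpoint Gam (i : nat) (f g : T -> R) : T -> R :=
  match i with
  | 0 => fun x => f x * g x
  | i'.+1 => fun x =>
      (lap (Gam i' f g) x - Gam i' f (lap g) x - Gam i' (lap f) g x) / 2
  end.

Definition Gamma (f : T -> R) : T -> R := Gam 1 f f.
Definition Gamma2 (f : T -> R) : T -> R := Gam 2 f f.

(* Bakry-Emery curvature at x, as an extended real:
   inf { Gamma2 f (x) : Gamma f (x) = 1 }  (= +oo if the set is empty) *)
Definition BEcurv (x : T) : \bar R :=
  ereal_inf [set (Gamma2 f x)%:E | f in [set f : T -> R | Gamma f x = 1]].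

End Graph.

From HB Require Import structures.
From mathcomp Require Import all_boot all_order all_algebra.
From mathcomp Require Import boolp classical_sets reals constructive_ereal ereal.
From mathcomp Require Import ring lra.

Set Implicit Arguments.
Unset Strict Implicit.
Unset Printing Implicit Defensive.
Import Order.TTheory GRing.Theory Num.Theory.
Local Open Scope ring_scope.

(* Fix a vertex y, let f := d(., y) and let m be its mean. As f is 1-Lipschitz,
   Gamma f <= Deg / 2. Solve the Poisson equation lap g = m - f. Then
   Gamma2 g = lap (Gamma g) / 2 + Gamma(g, f), so at a maximum of Gamma g the
   curvature inequality K Gamma g <= Gamma2 g and AM-GM give
   K^2 Gamma g <= max Gamma f <= D / 2 everywhere (D the maximal degree).
   Evaluating at y, where f vanishes, m = lap g y <= K Gamma g y + Deg y / 2K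
   <= D / K, again by AM-GM. Averaging over y bounds diam_eff. *)

Lemma amgm_le (R : realFieldType) (K a b : R) : 0 < K ->
  a * b <= K / 2 * a ^+ 2 + (2 * K)^-1 * b ^+ 2.
Proof.
move=> K_gt0.
have -> : K / 2 * a ^+ 2 + (2 * K)^-1 * b ^+ 2
          = a * b + (K * a - b) ^+ 2 / (2 * K).
  by field; rewrite lt0r_neq0.
by rewrite lerDl divr_ge0 ?sqr_ge0 ?mulr_ge0 ?ltW.
Qed.

Lemma kernel_surj (R : fieldType) (T : finType) (k : T -> T -> R) :
  (forall a : T -> R, (forall x, \sum_z a z * k z x = 0) -> forall z, a z = 0) ->
  forall h : T -> R, exists g : T -> R, forall x, \sum_z g z * k z x = h x.
Proof.
move=> k_inj h.
pose A : 'M[R]_#|T| := \matrix_(i, j) k (enum_val i) (enum_val j).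
pose fun_of (u : 'rV[R]_#|T|) : T -> R := fun z => u 0 (enum_rank z).
have mulA u x : (u *m A) 0 (enum_rank x) = \sum_z fun_of u z * k z x.
  rewrite mxE (reindex enum_rank) /=; last exact: onW_bij (enum_rank_bij T).
  by apply: eq_bigr => z _; rewrite mxE !enum_rankK.
have A_unit : A \in unitmx.
  rewrite -row_free_unit; apply/inj_row_free => u uA0; apply/rowP => i.
  rewrite mxE -(enum_valK i); apply: (k_inj (fun_of u)) => x.
  by rewrite -mulA uA0 mxE.
exists (fun_of (\row_j h (enum_val j) *m invmx A)) => x.
by rewrite -mulA mulmxKV // mxE enum_rankK.
Qed.

Section CarreDuChamp.
Variables (R : realType) (T : finType) (e : rel T).
Implicit Types (a b f g : T -> R).

Lemma GamSE i a b x : Gam e i.+1 a b x =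
  (lap e (Gam e i a b) x - Gam e i a (lap e b) x - Gam e i (lap e a) b x) / 2.
Proof. by []. Qed.

Lemma Gam1E a b x :
  Gam e 1 a b x = (\sum_(z | e x z) (a z - a x) * (b z - b x)) / 2.
Proof.
rewrite /= /lap; congr (_ / 2).
by rewrite mulr_sumr mulr_suml -!sumrB; apply: eq_bigr => z _; ring.
Qed.

Lemma GammaE a x : Gamma e a x = (\sum_(z | e x z) (a z - a x) ^+ 2) / 2.
Proof. by rewrite /Gamma Gam1E; under eq_bigr do rewrite -expr2. Qed.

Lemma Gamma_ge0 a x : 0 <= Gamma e a x.
Proof. by rewrite GammaE divr_ge0 // sumr_ge0 // => z _; apply: sqr_ge0. Qed.

Lemma Gamma_eq0 a x : Gamma e a x = 0 -> forall z, e x z -> a z = a x.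
Proof.
move/eqP; rewrite GammaE mulf_eq0 invr_eq0 pnatr_eq0 orbF => /eqP.
move/psumr_eq0P => sq0 z exz; apply/eqP; rewrite -subr_eq0 -sqrf_eq0.
by apply/eqP/sq0 => // w _; apply: sqr_ge0.
Qed.

Lemma sum1_adj x : \sum_(z | e x z) (1 : R) = (Deg e x)%:R.
Proof. by rewrite /Deg cardsE -sum1_card natr_sum. Qed.

Lemma Gam1_le_amgm (K : R) a b x : 0 < K ->
  Gam e 1 a b x <= K / 2 * Gamma e a x + (2 * K)^-1 * Gamma e b x.
Proof.
move=> K_gt0; rewrite Gam1E !GammaE !mulrA -mulrDl ler_pM2r // !mulr_sumr.
by rewrite -big_split; apply: ler_sum => z _; apply: amgm_le.
Qed.

Lemma lap_le_amgm (K : R) a x : 0 < K ->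
  lap e a x <= K * Gamma e a x + (Deg e x)%:R / (2 * K).
Proof.
move=> K_gt0; rewrite GammaE -sum1_adj [K * _]mulrCA [_ * (K / 2)]mulrC.
rewrite [_ / (2 * K)]mulrC /lap !mulr_sumr -big_split; apply: ler_sum => z _.
by have := @amgm_le _ K (a z - a x) 1 K_gt0; rewrite mulr1 expr1n.
Qed.

Lemma lapZ (k : R) a x : lap e (fun z => k * a z) x = k * lap e a x.
Proof. by rewrite /lap mulr_sumr; apply: eq_bigr => z _; ring. Qed.

Lemma Gam1Z (k l : R) a b x :
  Gam e 1 (fun z => k * a z) (fun z => l * b z) x = k * l * Gam e 1 a b x.
Proof.
rewrite !Gam1E mulrA; congr (_ / 2).
by rewrite mulr_sumr; apply: eq_bigr => z _; ring.
Qed.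

Lemma Gamma2Z (k : R) a x :
  Gamma2 e (fun z => k * a z) x = k ^+ 2 * Gamma2 e a x.
Proof.
rewrite /Gamma2 [LHS]GamSE [Gam _ 2 a a x]GamSE.
rewrite (funext (lapZ k a)) (funext (Gam1Z k k a a)) lapZ !Gam1Z; ring.
Qed.

Lemma Gamma2_ge0 a x : Gamma e a x = 0 -> 0 <= Gamma2 e a x.
Proof.
move=> G0; have a_loc := Gamma_eq0 G0.
have Gam1_loc b : Gam e 1 a b x = 0 /\ Gam e 1 b a x = 0.
  rewrite !Gam1E !big1 ?mul0r // => z /a_loc ->; rewrite subrr ?mulr0 ?mul0r //.
rewrite /Gamma2 GamSE (proj1 (Gam1_loc _)) (proj2 (Gam1_loc _)) !subr0.
rewrite divr_ge0 // /lap sumr_ge0 // => z _.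
by rewrite -/(Gamma e a z) -/(Gamma e a x) G0 subr0 Gamma_ge0.
Qed.

Lemma Gamma2_lap_eq (m : R) f g x : (forall z, lap e g z = m - f z) ->
  Gamma2 e g x = lap e (Gamma e g) x / 2 + Gam e 1 g f x.
Proof.
move=> lap_g; rewrite /Gamma2 GamSE (funext lap_g) !Gam1E -/(Gamma e g).
set S := \sum_(z | e x z) (g z - g x) * (f z - f x).
have -> : \sum_(z | e x z) (g z - g x) * (m - f z - (m - f x)) = - S.
  by rewrite -sumrN; apply: eq_bigr => z _; ring.
have -> : \sum_(z | e x z) (m - f z - (m - f x)) * (g z - g x) = - S.
  by rewrite -sumrN; apply: eq_bigr => z _; ring.
by field.
Qed.

Lemma BEcurv_CD (K : R) : (forall x, (K%:E <= BEcurv e R x)%E) ->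
  forall a x, K * Gamma e a x <= Gamma2 e a x.
Proof.
move=> curv_ge a x; have [G0 | G_gt0] := eqVneq (Gamma e a x) 0.
  by rewrite G0 mulr0 Gamma2_ge0.
have {G_gt0} G_gt0 : 0 < Gamma e a x by rewrite lt_def G_gt0 Gamma_ge0.
pose k := (Num.sqrt (Gamma e a x))^-1.
have k2G : k ^+ 2 * Gamma e a x = 1.
  by rewrite exprVn sqr_sqrtr ?mulVf ?ltW ?lt0r_neq0.
have Gk1 : Gamma e (fun z => k * a z) x = 1 by rewrite /Gamma Gam1Z -expr2.
have := le_trans (curv_ge x) (ereal_inf_lbound (ex_intro2 _ _ _ Gk1 erefl)).
rewrite lee_fin Gamma2Z => /(ler_wpM2r (ltW G_gt0)).
by rewrite mulrAC k2G mul1r mulrC.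
Qed.

End CarreDuChamp.

Section Poisson.
Variables (R : realType) (T : finType) (e : rel T).
Hypotheses (e_sym : symmetric e) (e_conn : connected_graph e).
Implicit Types (a h : T -> R).

Lemma sum_lap a : \sum_x lap e a x = 0.
Proof.
rewrite /lap; under eq_bigr do rewrite sumrB.
rewrite sumrB; apply/eqP; rewrite subr_eq0; apply/eqP.
rewrite (eq_bigr (fun x => \sum_y (if e x y then a y else 0))); last first.
  by move=> x _; rewrite big_mkcond.
rewrite exchange_big /=; apply: eq_bigr => x _; rewrite [RHS]big_mkcond.
by apply: eq_bigr => y _; rewrite e_sym.
Qed.

Lemma lap_eq0_const a : (forall x, lap e a x = 0) -> forall x y, a y = a x.
Proof.
move=> harm x.
pose xm := [arg max_(z > x) a z]%O.
have a_max z : a z <= a xm by rewrite /xm; case: arg_maxP => // ? _; apply.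
have max_adj u v : (forall z, a z <= a u) -> e u v -> a v = a u.
  move=> u_max euv; have : \sum_(z | e u z) (a u - a z) = 0.
    rewrite -[RHS]oppr0 -[in RHS](harm u) /lap -sumrN.
    by apply: eq_bigr => z _; rewrite opprB.
  move/psumr_eq0P => eq0; apply/eqP; rewrite eq_sym -subr_eq0; apply/eqP.
  by apply: eq0 => // z _; rewrite subr_ge0.
suff a_cst y : a y = a xm by move=> y; rewrite !a_cst.
have /connectP [p p_path ->] := e_conn xm y.
elim: p xm a_max p_path => [|z p IHp] u u_max //= /andP [euz p_path].
have auz := max_adj u z u_max euz.
by rewrite (IHp z) // => w; rewrite auz.
Qed.

Lemma lap_kernel a x :
  lap e a x = \sum_z a z * lap e (fun w => (w == z)%:R) x.
Proof.
have pick w : \sum_z a z * (w == z)%:R = a w.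
  rewrite (bigD1 w) //= eqxx mulr1 big1 ?addr0 // => z.
  by rewrite eq_sym => /negbTE ->; rewrite mulr0.
rewrite /lap; under [RHS]eq_bigr do rewrite mulr_sumr.
rewrite exchange_big /=; apply: eq_bigr => y _.
by under eq_bigr do rewrite mulrBr; rewrite sumrB !pick.
Qed.

Lemma sum_sub_lap a : \sum_x (\sum_z a z - lap e a x) = #|T|%:R * \sum_z a z.
Proof. by rewrite sumrB sum_lap subr0 sumr_const mulr_natl. Qed.

Lemma poisson h : \sum_x h x = 0 -> exists g, forall x, lap e g x = h x.
Proof.
move=> h_sum0.
have card_neq0 (x : T) : #|T|%:R != 0 :> R.
  by rewrite pnatr_eq0 -lt0n; apply/card_gt0P; exists x.
(* Unlike [lap], the operator [a |-> sum a - lap a] is injective, hence onto; a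
   preimage of [- h] has zero sum because [h] does, so it solves [lap g = h]. *)
pose k z x : R := 1 - lap e (fun w => (w == z)%:R) x.
have kE a x : \sum_z a z * k z x = \sum_z a z - lap e a x.
  by rewrite lap_kernel -sumrB; apply: eq_bigr => z _; rewrite mulrBr mulr1.
have k_inj a : (forall x, \sum_z a z * k z x = 0) -> forall x, a x = 0.
  move=> ak0 x; have sub0 y : \sum_z a z - lap e a y = 0 by rewrite -kE.
  have sum0 : \sum_z a z = 0.
    apply/eqP; rewrite -(mulrI_eq0 _ (mulfI (card_neq0 x))) -sum_sub_lap.
    by rewrite big1.
  have harm y : lap e a y = 0.
    by apply/eqP; rewrite -oppr_eq0 -(sub0 y) sum0 sub0r.
  have : \sum_(y : T) a y = \sum_(y : T) a x.
    by apply: eq_bigr => y _; exact: lap_eq0_const harm x y.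
  rewrite sum0 sumr_const -mulr_natl => /esym/eqP.
  by rewrite mulf_eq0 (negbTE (card_neq0 x)) => /eqP.
have [g gk] := kernel_surj k_inj (fun x => - h x).
exists g => x.
have sum_g0 : \sum_z g z = 0.
  apply/eqP; rewrite -(mulrI_eq0 _ (mulfI (card_neq0 x))) -sum_sub_lap.
  by under eq_bigr do rewrite -kE gk; rewrite sumrN h_sum0 oppr0.
by apply: oppr_inj; rewrite -gk kE sum_g0 sub0r.
Qed.

End Poisson.

Section Distance.
Variables (T : finType) (e : rel T).

Lemma dist_walk x y : (dist e x y < #|T|)%N -> walk_len e x y (dist e x y).
Proof.
move=> lt_dist; have has_walk : has (walk_len e x y) (iota 0 #|T|).
  by rewrite has_find size_iota.
by have := nth_find 0%N has_walk; rewrite nth_iota.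
Qed.

Lemma dist_le_walk x y n : walk_len e x y n -> (dist e x y <= n)%N.
Proof.
move=> walk_n; have [lt_n | le_n] := ltnP n #|T|.
  rewrite leqNgt; apply/negP => /(before_find 0%N).
  by rewrite nth_iota // walk_n.
by apply: leq_trans le_n; rewrite /dist -[X in (_ <= X)%N](size_iota 0) find_size.
Qed.

Lemma dist_xx x : dist e x x = 0%N.
Proof.
apply/eqP; rewrite -leqn0; apply: dist_le_walk.
by apply/existsP; exists [tuple]; rewrite /= eqxx.
Qed.

Lemma dist_adj x z y : e x z -> (dist e x y <= (dist e z y).+1)%N.
Proof.
move=> exz; have [lt_dist | ge_dist] := ltnP (dist e z y) #|T|.
  apply: dist_le_walk.
  have /existsP [p /andP [p_path p_last]] := dist_walk lt_dist.
  by apply/existsP; exists [tuple of z :: p]; rewrite /= exz p_path.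
apply: leq_trans (leqnSn _); apply: leq_trans ge_dist.
by rewrite /dist -[X in (_ <= X)%N](size_iota 0) find_size.
Qed.

Lemma Gamma_dist_le (R : realType) y x : symmetric e ->
  Gamma e (fun z => (dist e z y)%:R : R) x <= (Deg e x)%:R / 2.
Proof.
move=> e_sym; rewrite GammaE ler_pM2r // -sum1_adj; apply: ler_sum => z exz.
have := dist_adj y exz; have := dist_adj y (etrans (e_sym z x) exz).
by rewrite -!(ler_nat R) -!natr1; nra.
Qed.

End Distance.

Section CurvatureBound.
Variables (R : realType) (T : finType) (e : rel T) (K : R).
Hypotheses (K_gt0 : 0 < K)
  (CD : forall (a : T -> R) x, K * Gamma e a x <= Gamma2 e a x).

Lemma Gamma_le_of_lap_eq (m C : R) (f g : T -> R) :
  (forall x, lap e g x = m - f x) -> (forall x, Gamma e f x <= C) ->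
  forall x, K ^+ 2 * Gamma e g x <= C.
Proof.
move=> lap_g Gf_le x.
pose xm := [arg max_(z > x) Gamma e g z]%O.
have G_max z : Gamma e g z <= Gamma e g xm.
  by rewrite /xm; case: arg_maxP => // ? _; apply.
have lapG_le0 : lap e (Gamma e g) xm <= 0.
  by rewrite /lap sumr_le0 // => z _; rewrite subr_le0.
have := CD g xm; rewrite (Gamma2_lap_eq _ lap_g).
have := Gam1_le_amgm e g f xm K_gt0; have := Gf_le xm.
set G := Gamma e g xm; set F := Gamma e f xm.
move=> FC W_le KG_le.
have FC' : (2 * K)^-1 * F <= (2 * K)^-1 * C.
  by rewrite ler_wpM2l // invr_ge0 mulr_ge0 // ltW.
have half : K / 2 * G <= (2 * K)^-1 * C by lra.
apply: le_trans (_ : K ^+ 2 * G <= C); first by rewrite ler_pM2l ?exprn_gt0.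
have -> : K ^+ 2 * G = 2 * K * (K / 2 * G) by field.
apply: le_trans (ler_wpM2l _ half) _; first by rewrite mulr_ge0 // ltW.
by rewrite mulrA mulfV ?mul1r // mulf_neq0 // lt0r_neq0.
Qed.

Lemma sub_le_of_lap_eq (m D : R) (f g : T -> R) y :
  (forall x, lap e g x = m - f x) -> (forall x, Gamma e f x <= D / 2) ->
  (forall x, (Deg e x)%:R <= D) -> m - f y <= D / K.
Proof.
move=> lap_g Gf_le Deg_le; rewrite -lap_g.
apply: le_trans (lap_le_amgm e g y K_gt0) _.
have KG_le : K ^+ 2 * Gamma e g y <= D / 2 := Gamma_le_of_lap_eq lap_g Gf_le y.
have -> : D / K = D / (2 * K) + D / (2 * K) by field; rewrite lt0r_neq0.
apply: lerD; last by rewrite ler_pM2r ?invr_gt0 ?mulr_gt0.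
by rewrite ler_pdivlMr ?mulr_gt0 //; lra.
Qed.

Hypotheses (e_sym : symmetric e) (e_conn : connected_graph e).

Lemma sum_dist_le y :
  \sum_x (dist e x y)%:R <= #|T|%:R * ((maxDeg e)%:R / K).
Proof.
set D : R := (maxDeg e)%:R.
have Deg_le x : (Deg e x)%:R <= D by rewrite ler_nat; apply: leq_bigmax.
pose f x : R := (dist e x y)%:R.
have Gf_le x : Gamma e f x <= D / 2.
  by apply: le_trans (Gamma_dist_le R y x e_sym) _; rewrite ler_pM2r.
have card_gt0 : (0 < #|T|)%N by apply/card_gt0P; exists y.
pose m := (\sum_x f x) / #|T|%:R.
have [g lap_g] : exists g, forall x, lap e g x = m - f x.
  apply: poisson => //; rewrite sumrB sumr_const -mulr_natr.
  by rewrite mulfVK ?subrr // pnatr_eq0 -lt0n.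
have := sub_le_of_lap_eq y lap_g Gf_le Deg_le.
by rewrite /f dist_xx subr0 /m ler_pdivrMr ?ltr0n // mulrC.
Qed.

End CurvatureBound.

Theorem theoremA1 (R : realType) (T : finType) (e : rel T) (K : R) :
  simple_graph e -> connected_graph e -> 0 < K ->
  (forall x : T, (K%:E <= BEcurv e R x)%E) ->
  diam_eff e R <= (maxDeg e)%:R / K.
Proof.
move=> [e_sym _] e_conn K_gt0 curv_ge.
have bound_ge0 : 0 <= (maxDeg e)%:R / K by rewrite divr_ge0 // ltW.
rewrite /diam_eff; have [-> | card_gt0] := posnP #|T|.
  by rewrite expr0n /= invr0 mul0r.
rewrite mulrC ler_pdivrMr ?exprn_gt0 ?ltr0n // exchange_big /=.
have sum_le y := sum_dist_le K_gt0 (BEcurv_CD curv_ge) e_sym e_conn y.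
apply: le_trans (ler_sum _ (fun y _ => sum_le y)) _.
by rewrite sumr_const -[X in X <= _]mulr_natr mulrAC -expr2 [X in _ <= X]mulrC.
Qed.
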